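(* For every integer $d\ge0$, $\|B^{(d)}\|_\infty:=\sup_{k\ge0}\sum_{\ell\ge0}|b^{(d)}_{k,\ell}|\le 3d+2$.
   Context: Let $\{p_k\}_{k\ge0}$ be the orthonormal Legendre polynomials on $[-1,1]$: $p_k$ has exact degree $k$, positive leading coefficient, and $\int_{-1}^1 p_k(t)p_\ell(t)\,dt=\delta_{k\ell}$. Let $\Theta$ be the Heaviside function, $\Theta(x)=0$ for $x<0$ and $\Theta(x)=1$ for $x\ge0$. The Legendre basis matrix of degree $d$ is the infinite matrix $B^{(d)}=[b^{(d)}_{k,\ell}]_{k,\ell\ge0}$ with $b^{(d)}_{k,\ell}=\int_{-1}^1\int_{-1}^1 p_d(\tau)\Theta(\tau-\rho)p_k(\tau)p_\ell(\rho)\,d\rho\,d\tau$, i.e. the coefficient matrix of $p_d(t)\Theta(t-s)$. *)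

From Stdlib Require Import Reals.
From Coquelicot Require Import Coquelicot.
Open Scope R_scope.

(* Exact degree k with positive leading
   coefficient is then the hypothesis 0 < c k k. *)
Definition peval (c : nat -> nat -> R) (k : nat) (t : R) : R :=
  sum_f_R0 (fun i => c k i * t ^ i) k.

Definition Theta (x : R) : R := if Rlt_dec x 0 then 0 else 1.

Definition bmat (c : nat -> nat -> R) (d k l : nat) : R :=
  RInt (fun tau =>
    RInt (fun rho => peval c d tau * Theta (tau - rho) * peval c k tau * peval c l rho)
      (-1) 1) (-1) 1.

(* Write p_j = peval c j and Q(r) = int_r^1 p_d p_k (the tail integral).
   1. Performing the inner rho-integration against Theta(tau - rho) and then
      integrating by parts shows b_{k,l} = <Q, p_l>: row k of B^(d) consists of
      the Fourier coefficients of Q in the orthonormal family (p_l).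
   2. Banded structure: Q is a polynomial of degree <= d + k + 1, and the first
      form of b_{k,l} is <p_k, p_d (A_l - A_l(-1))> with a polynomial of degree
      <= d + l + 1; orthogonality of p_j to lower degrees gives b_{k,l} = 0
      unless |k - l| <= d + 1, i.e. the row lives in a window of 2d + 3 indices.
   3. Bessel's inequality bounds the squared l2 norm of the row by ||Q||^2, and
      |Q(r)| <= (int_r^1 p_d^2 + int_r^1 p_k^2)/2 <= 1 gives ||Q||^2 <= 2
      (<= 7/6 when d = 0, since then p_0^2 = 1/2).
   4. The inequality |x| <= lam/2 + x^2/(2 lam) summed over the window turns
      these into the l1 bound, with lam = 1 (d >= 1) or lam = 2/3 (d = 0). *)

From Stdlib Require Import Reals Lra Lia.
From Coquelicot Require Import Coquelicot.
Open Scope R_scope.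

Lemma sum_kronecker (b : nat -> R) (l N : nat) : (l <= N)%nat ->
  sum_f_R0 (fun j => b j * (if Nat.eq_dec l j then 1 else 0)) N = b l.
Proof.
  intros HlN.
  assert (Hbelow : forall M, (M < l)%nat ->
    sum_f_R0 (fun j => b j * (if Nat.eq_dec l j then 1 else 0)) M = 0).
  { intros M HM. apply sum_eq_R0. intros j Hj.
    destruct (Nat.eq_dec l j); [lia | ring]. }
  induction N as [|N IH].
  - simpl. destruct (Nat.eq_dec l 0); [subst; ring | lia].
  - rewrite tech5. destruct (Nat.eq_dec l (S N)) as [Heq|Hne].
    + subst l. rewrite Hbelow by lia. ring.
    + rewrite IH by lia. ring.
Qed.

Definition window (a w l : nat) : R :=
  if andb (a <=? l)%nat (l <=? a + w)%nat then 1 else 0.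

(* A window of width w + 1 meets at most w + 1 indices; the auxiliary bound
   by the number S N - a of indices in [a, N] drives the induction. *)
Lemma sum_window_le (a w N : nat) : sum_f_R0 (window a w) N <= INR w + 1.
Proof.
  pose proof (pos_INR w) as Hw.
  enough (H : sum_f_R0 (window a w) N <= INR (S N - a)
              /\ sum_f_R0 (window a w) N <= INR w + 1) by apply H.
  induction N as [|N [IH1 IH2]]; unfold window in *.
  - destruct a; cbn; [destruct (0 <=? w)%nat|]; cbn; split; lra.
  - rewrite tech5.
    assert (Hgrow : INR (S N - a) <= INR (S (S N) - a)) by (apply le_INR; lia).
    destruct (a <=? S N)%nat eqn:E1; destruct (S N <=? a + w)%nat eqn:E2;
      cbn [andb]; try (split; lra).
    apply Nat.leb_le in E1, E2.
    replace (S (S N) - a)%nat with (S (S N - a)) by lia. rewrite S_INR.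
    assert (INR (S N - a) <= INR w) by (apply le_INR; lia).
    split; lra.
Qed.

Lemma abs_le_amgm (x lam : R) : 0 < lam -> Rabs x <= lam / 2 + x ^ 2 / (2 * lam).
Proof.
  intros Hlam.
  rewrite <- (pow2_abs x).
  pose proof (Rle_0_sqr (Rabs x - lam)). unfold Rsqr in *.
  apply (Rmult_le_reg_l (2 * lam)); [lra|].
  replace (2 * lam * (lam / 2 + Rabs x ^ 2 / (2 * lam)))
    with (lam * lam + Rabs x ^ 2) by (field; lra).
  nra.
Qed.

(* l1-l2 inequality for a sequence vanishing outside a window of width
   w + 1: the window only contributes lam/2 per index, the squares 1/(2 lam). *)
Lemma sum_abs_le_window (b : nat -> R) (a w N : nat) (lam : R) : 0 < lam ->
  (forall l, (l < a \/ a + w < l)%nat -> b l = 0) ->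
  sum_f_R0 (fun l => Rabs (b l)) N
  <= lam / 2 * (INR w + 1) + sum_f_R0 (fun l => b l ^ 2) N / (2 * lam).
Proof.
  intros Hlam Hsupp.
  assert (Hpt : forall l, Rabs (b l) <= window a w l * (lam / 2) + b l ^ 2 / (2 * lam)).
  { intros l. unfold window.
    destruct (a <=? l)%nat eqn:E1; destruct (l <=? a + w)%nat eqn:E2; cbn [andb].
    - rewrite Rmult_1_l. apply abs_le_amgm, Hlam.
    all: rewrite Hsupp by (rewrite ?Nat.leb_gt in E1; rewrite ?Nat.leb_gt in E2; lia);
         rewrite Rabs_R0; cbn; lra. }
  eapply Rle_trans; [apply sum_Rle; intros l _; apply Hpt|].
  rewrite sum_plus, <- scal_sum.
  unfold Rdiv at 2. rewrite <- scal_sum.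
  pose proof (sum_window_le a w N).
  nra.
Qed.

Definition cont (f : R -> R) : Prop := forall x, continuous f x.

Lemma cont_const (x : R) : cont (fun _ => x).
Proof. intros y. apply continuous_const. Qed.

Lemma cont_plus (f g : R -> R) : cont f -> cont g -> cont (fun x => f x + g x).
Proof. intros Hf Hg x. apply (continuous_plus f g); auto. Qed.

Lemma cont_mult (f g : R -> R) : cont f -> cont g -> cont (fun x => f x * g x).
Proof. intros Hf Hg x. apply (continuous_mult f g); auto. Qed.

Lemma cont_minus (f g : R -> R) : cont f -> cont g -> cont (fun x => f x - g x).
Proof. intros Hf Hg x. apply (continuous_minus f g); auto. Qed.

Lemma cont_sum (F : nat -> R -> R) (m : nat) :
  (forall i, cont (F i)) -> cont (fun t => sum_f_R0 (fun i => F i t) m).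
Proof.
  intros HF. induction m as [|m IH]; [apply HF|].
  intros x. apply continuous_ext with (fun t => sum_f_R0 (fun i => F i t) m + F (S m) t).
  - intros t. symmetry. apply tech5.
  - apply cont_plus; auto.
Qed.

Lemma cont_pow (i : nat) : cont (fun t => t ^ i).
Proof.
  induction i as [|i IH]; [exact (cont_const 1)|].
  apply (cont_mult (fun t => t)); [intros x; apply continuous_id | exact IH].
Qed.

Lemma cont_of_derive (A g : R -> R) : (forall t, is_derive A t (g t)) -> cont A.
Proof.
  intros HA x. apply (ex_derive_continuous (K := R_AbsRing) (V := R_NormedModule)).
  eexists. apply HA.
Qed.

Ltac solve_cont :=
  solve [repeat first [ assumption | apply cont_const | apply cont_minus | apply cont_plus
                       | apply cont_mult | apply cont_pow ]].

Lemma cont_ex_RInt (f : R -> R) (a b : R) : cont f -> ex_RInt f a b.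
Proof. intros Hf. apply (ex_RInt_continuous (V := R_CompleteNormedModule)). auto. Qed.

(* Extensionality of the integral for real functions; stating the pointwise
   equation at type R, rather than at a normed-module carrier, lets ring apply. *)
Lemma RInt_extR (f g : R -> R) (a b : R) :
  (forall x, Rmin a b < x < Rmax a b -> f x = g x) -> RInt f a b = RInt g a b.
Proof. apply RInt_ext. Qed.

Lemma is_RInt_extR (f g : R -> R) (a b l : R) :
  (forall x, Rmin a b < x < Rmax a b -> f x = g x) -> is_RInt f a b l -> is_RInt g a b l.
Proof. apply is_RInt_ext. Qed.

Lemma RInt_plusR (f g : R -> R) (a b : R) : cont f -> cont g ->
  RInt (fun x => f x + g x) a b = RInt f a b + RInt g a b.
Proof. intros Hf Hg. apply (RInt_plus f g); apply cont_ex_RInt; auto. Qed.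

Lemma RInt_minusR (f g : R -> R) (a b : R) : cont f -> cont g ->
  RInt (fun x => f x - g x) a b = RInt f a b - RInt g a b.
Proof. intros Hf Hg. apply (RInt_minus f g); apply cont_ex_RInt; auto. Qed.

Lemma RInt_scalR (f : R -> R) (k a b : R) : cont f ->
  RInt (fun x => k * f x) a b = k * RInt f a b.
Proof. intros Hf. apply (RInt_scal f a b k), cont_ex_RInt, Hf. Qed.

Lemma RInt_sumR (F : nat -> R -> R) (m : nat) (a b : R) : (forall i, cont (F i)) ->
  RInt (fun t => sum_f_R0 (fun i => F i t) m) a b = sum_f_R0 (fun i => RInt (F i) a b) m.
Proof.
  intros HF. induction m as [|m IH]; [reflexivity|].
  rewrite tech5, <- IH, <- RInt_plusR by (try apply cont_sum; auto).
  apply RInt_ext. intros x _. apply tech5.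
Qed.

Lemma RInt_antideriv (A g : R -> R) (a b : R) :
  (forall t, is_derive A t (g t)) -> cont g -> RInt g a b = A b - A a.
Proof.
  intros HA Hg. apply is_RInt_unique, (is_RInt_derive A g); auto.
Qed.

Lemma is_derive_shift (A : R -> R) (a x dA : R) :
  is_derive A x dA -> is_derive (fun t => A t - a) x dA.
Proof.
  intros HA. replace dA with (minus dA zero) by (unfold minus, plus, opp, zero; cbn; ring).
  exact (is_derive_minus A (fun _ => a) x dA zero HA (is_derive_const a x)).
Qed.

(* Integration by parts, with the boundary terms killed by normalising the
   antiderivatives F and G to vanish at b and a respectively. *)
Lemma RInt_by_parts (F f G g : R -> R) (a b : R) :
  (forall t, is_derive F t (f t)) -> (forall t, is_derive G t (g t)) ->
  cont f -> cont g ->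
  RInt (fun t => f t * (G t - G a)) a b = RInt (fun t => (F b - F t) * g t) a b.
Proof.
  intros HF HG Hf Hg.
  assert (HFc := cont_of_derive F f HF). assert (HGc := cont_of_derive G g HG).
  set (H := fun t => (F t - F b) * (G t - G a)).
  assert (HH : forall t, is_derive H t (f t * (G t - G a) + (F t - F b) * g t)).
  { intros t. apply (is_derive_mult (fun t => F t - F b) (fun t => G t - G a));
      [apply is_derive_shift, HF | apply is_derive_shift, HG | intros; apply Rmult_comm]. }
  assert (E : RInt (fun t => f t * (G t - G a) + (F t - F b) * g t) a b = H b - H a)
    by (apply RInt_antideriv; [exact HH | solve_cont]).
  replace (H b - H a) with 0 in E by (unfold H; cbv beta; ring).
  rewrite (RInt_extR _ (fun t => f t * (G t - G a) - (F b - F t) * g t)) in E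
    by (intros; ring).
  rewrite RInt_minusR in E; [lra | solve_cont ..].
Qed.

(* |int_r^1 u v| <= (int_r^1 u^2 + int_r^1 v^2) / 2, from |u v| <= (u^2 + v^2)/2. *)
Lemma RInt_mult_abs_le (u v : R -> R) (r : R) : r <= 1 -> cont u -> cont v ->
  Rabs (RInt (fun t => u t * v t) r 1)
  <= (RInt (fun t => u t * u t) r 1 + RInt (fun t => v t * v t) r 1) / 2.
Proof.
  intros Hr Hu Hv.
  assert (E : forall s, RInt (fun t => s * (u t * u t + v t * v t)) r 1
                = s * (RInt (fun t => u t * u t) r 1 + RInt (fun t => v t * v t) r 1)).
  { intros s. rewrite RInt_scalR, RInt_plusR by solve_cont. reflexivity. }
  apply Rabs_le. split.
  - replace (- _) with (-1/2 * (RInt (fun t => u t * u t) r 1 + RInt (fun t => v t * v t) r 1))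
      by field.
    rewrite <- E. apply RInt_le; [lra | apply cont_ex_RInt; solve_cont .. |].
    intros x _. pose proof (Rle_0_sqr (u x + v x)). unfold Rsqr in *. nra.
  - unfold Rdiv. rewrite Rmult_comm, <- E.
    apply RInt_le; [lra | apply cont_ex_RInt; solve_cont .. |].
    intros x _. pose proof (Rle_0_sqr (u x - v x)). unfold Rsqr in *. nra.
Qed.

Lemma RInt_sq_le (g h : R -> R) (a b : R) : a <= b -> cont g -> cont h ->
  (forall x, a <= x <= b -> Rabs (g x) <= h x) ->
  RInt (fun t => g t * g t) a b <= RInt (fun t => h t * h t) a b.
Proof.
  intros Hab Hg Hh Hgh.
  apply RInt_le; [exact Hab | apply cont_ex_RInt; solve_cont .. |].
  intros x Hx. specialize (Hgh x ltac:(lra)).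
  pose proof (Rabs_pos (g x)).
  rewrite <- (Rabs_pos_eq (g x * g x)), Rabs_mult by apply Rle_0_sqr. nra.
Qed.

Definition is_poly (m : nat) (f : R -> R) : Prop :=
  exists a : nat -> R, forall t, f t = sum_f_R0 (fun i => a i * t ^ i) m.

Lemma is_poly_ext (m : nat) (f g : R -> R) :
  (forall t, f t = g t) -> is_poly m f -> is_poly m g.
Proof. intros Hfg [a Ha]. exists a. intros t. rewrite <- Hfg. apply Ha. Qed.

Lemma is_poly_peval (c : nat -> nat -> R) (k : nat) : is_poly k (peval c k).
Proof. exists (c k). reflexivity. Qed.

Lemma is_poly_const (x : R) : is_poly 0 (fun _ => x).
Proof. exists (fun _ => x). intros t. cbn. ring. Qed.

Lemma is_poly_le (m n : nat) (f : R -> R) : (m <= n)%nat -> is_poly m f -> is_poly n f.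
Proof.
  intros Hmn [a Ha].
  exists (fun i => if Compare_dec.le_dec i m then a i else 0).
  intros t. rewrite Ha.
  replace n with (m + (n - m))%nat by lia.
  induction (n - m)%nat as [|j IH].
  - rewrite Nat.add_0_r. apply sum_eq. intros i Hi.
    destruct (Compare_dec.le_dec i m); [reflexivity | lia].
  - rewrite Nat.add_succ_r, tech5, <- IH.
    destruct (Compare_dec.le_dec (S (m + j)) m); [lia | ring].
Qed.

Lemma is_poly_plus (m : nat) (f g : R -> R) :
  is_poly m f -> is_poly m g -> is_poly m (fun t => f t + g t).
Proof.
  intros [a Ha] [b Hb]. exists (fun i => a i + b i). intros t.
  rewrite Ha, Hb, <- sum_plus. apply sum_eq. intros; ring.
Qed.

Lemma is_poly_scal (m : nat) (x : R) (f : R -> R) :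
  is_poly m f -> is_poly m (fun t => x * f t).
Proof.
  intros [a Ha]. exists (fun i => x * a i). intros t.
  rewrite Ha, scal_sum. apply sum_eq. intros; ring.
Qed.

Lemma is_poly_affine (m : nat) (x y : R) (f : R -> R) :
  is_poly m f -> is_poly m (fun t => x + y * f t).
Proof.
  intros Hf. apply is_poly_plus; [|apply is_poly_scal, Hf].
  apply (is_poly_le 0); [lia | apply is_poly_const].
Qed.

Lemma is_poly_sum (n m : nat) (F : nat -> R -> R) :
  (forall i, (i <= m)%nat -> is_poly n (F i)) ->
  is_poly n (fun t => sum_f_R0 (fun i => F i t) m).
Proof.
  induction m as [|m IH]; intros HF; [apply HF; lia|].
  apply is_poly_ext with (fun t => sum_f_R0 (fun i => F i t) m + F (S m) t).
  - intros t. symmetry. apply tech5.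
  - apply is_poly_plus; [apply IH; intros; apply HF | apply HF]; lia.
Qed.

Lemma is_poly_xmul (n : nat) (g : R -> R) : is_poly n g -> is_poly (S n) (fun t => t * g t).
Proof.
  intros [a Ha]. exists (fun i => match i with O => 0 | S j => a j end).
  intros t. rewrite decomp_sum by lia. cbn [Nat.pred].
  rewrite Ha, scal_sum. cbn. rewrite Rmult_0_l, Rplus_0_l.
  apply sum_eq. intros; ring.
Qed.

Lemma is_poly_powmul (i n : nat) (g : R -> R) :
  is_poly n g -> is_poly (i + n) (fun t => t ^ i * g t).
Proof.
  intros Hg. induction i as [|i IH].
  - apply is_poly_ext with g; [intros; cbn; ring | exact Hg].
  - apply is_poly_ext with (fun t => t * (t ^ i * g t)); [intros; cbn; ring|].
    apply is_poly_xmul, IH.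
Qed.

Lemma is_poly_mult (m n : nat) (f g : R -> R) :
  is_poly m f -> is_poly n g -> is_poly (m + n) (fun t => f t * g t).
Proof.
  intros [a Ha] Hg.
  apply is_poly_ext with (fun t => sum_f_R0 (fun i => a i * (t ^ i * g t)) m).
  { intros t. rewrite Ha, (Rmult_comm _ (g t)), scal_sum. apply sum_eq. intros; ring. }
  apply is_poly_sum. intros i Hi. apply is_poly_scal.
  apply (is_poly_le (i + n)); [lia | apply is_poly_powmul, Hg].
Qed.

Lemma is_poly_cont (m : nat) (f : R -> R) : is_poly m f -> cont f.
Proof.
  intros [a Ha] x. apply continuous_ext with (fun t => sum_f_R0 (fun i => a i * t ^ i) m).
  - intros t. symmetry. apply Ha.
  - apply cont_sum. intros i. solve_cont.
Qed.

Lemma is_derive_poly_antideriv (a : nat -> R) (m : nat) (t : R) :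
  is_derive (fun t => sum_f_R0 (fun i => a i / INR (S i) * t ^ S i) m) t
    (sum_f_R0 (fun i => a i * t ^ i) m).
Proof.
  induction m as [|m IH].
  - cbn. auto_derive; [exact I | field].
  - apply is_derive_ext with (fun t => sum_f_R0 (fun i => a i / INR (S i) * t ^ S i) m
                                      + a (S m) / INR (S (S m)) * t ^ S (S m)).
    { intros; symmetry; apply tech5. }
    rewrite tech5. apply (is_derive_plus _ (fun t => a (S m) / INR (S (S m)) * t ^ S (S m))).
    + exact IH.
    + auto_derive; [exact I|].
      change (match m with 0%nat => 1 | S _ => INR m + 1 end) with (INR (S m)).
      rewrite S_INR. pose proof (pos_INR m). cbn [pow]. field. lra.
Qed.

Lemma is_poly_antideriv (m : nat) (f : R -> R) : is_poly m f ->
  exists A, is_poly (S m) A /\ forall t, is_derive A t (f t).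
Proof.
  intros [a Ha]. exists (fun t => sum_f_R0 (fun i => a i / INR (S i) * t ^ S i) m). split.
  - exists (fun i => match i with O => 0 | S j => a j / INR (S j) end).
    intros t. rewrite (decomp_sum _ (S m)) by lia. cbn. ring.
  - intros t. rewrite Ha. apply is_derive_poly_antideriv.
Qed.

Definition coef (c : nat -> nat -> R) (g : R -> R) (l : nat) : R :=
  RInt (fun t => g t * peval c l t) (-1) 1.

Section Orthonormal.

Variable c : nat -> nat -> R.
Hypothesis Hlead : forall k, 0 < c k k.
Hypothesis Horth : forall k l,
  RInt (fun t => peval c k t * peval c l t) (-1) 1 = if Nat.eq_dec k l then 1 else 0.

Lemma peval_cont (j : nat) : cont (peval c j).
Proof. apply (is_poly_cont j), is_poly_peval. Qed.

(* Triangularity: p_0, ..., p_m span the polynomials of degree <= m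
   (subtract the multiple of p_m that cancels the leading coefficient). *)
Lemma is_poly_span (m : nat) (q : R -> R) : is_poly m q ->
  exists beta : nat -> R, forall t, q t = sum_f_R0 (fun j => beta j * peval c j t) m.
Proof.
  revert q. induction m as [|m IH]; intros q [a Ha].
  - exists (fun _ => a 0%nat / c 0%nat 0%nat). intros t. rewrite Ha. unfold peval. cbn.
    field. pose proof (Hlead 0). lra.
  - set (s := a (S m) / c (S m) (S m)).
    destruct (IH (fun t => q t - s * peval c (S m) t)) as [beta Hbeta].
    { exists (fun i => a i - s * c (S m) i). intros t. rewrite Ha. unfold peval.
      rewrite scal_sum, <- minus_sum, tech5.
      replace (a (S m) * t ^ S m - c (S m) (S m) * t ^ S m * s) with 0.
      - rewrite Rplus_0_r. apply sum_eq. intros; ring.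
      - unfold s. field. pose proof (Hlead (S m)). lra. }
    exists (fun j => if Nat.eq_dec j (S m) then s else beta j). intros t.
    rewrite tech5. destruct (Nat.eq_dec (S m) (S m)) as [_|]; [|lia].
    replace (q t) with ((q t - s * peval c (S m) t) + s * peval c (S m) t) by ring.
    rewrite Hbeta. f_equal. apply sum_eq. intros i Hi.
    destruct (Nat.eq_dec i (S m)); [lia | reflexivity].
Qed.

Lemma peval_orth_low (k m : nat) (q : R -> R) : is_poly m q -> (m < k)%nat ->
  RInt (fun t => peval c k t * q t) (-1) 1 = 0.
Proof.
  intros Hq Hmk. destruct (is_poly_span m q Hq) as [beta Hbeta].
  rewrite (RInt_extR _ (fun t => sum_f_R0 (fun j => beta j * (peval c k t * peval c j t)) m))
    by (intros; rewrite Hbeta, scal_sum; apply sum_eq; intros; ring).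
  rewrite RInt_sumR
    by (intros i; pose proof (peval_cont k); pose proof (peval_cont i); solve_cont).
  apply sum_eq_R0. intros i Hi.
  rewrite RInt_scalR, Horth by (pose proof (peval_cont k); pose proof (peval_cont i); solve_cont).
  destruct (Nat.eq_dec k i); [lia | ring].
Qed.

Lemma peval_sq_tail_le (j : nat) (r : R) : -1 <= r <= 1 ->
  RInt (fun t => peval c j t * peval c j t) r 1 <= 1.
Proof.
  intros Hr. pose proof (peval_cont j) as Hp.
  assert (E : plus (RInt (fun t => peval c j t * peval c j t) (-1) r)
                   (RInt (fun t => peval c j t * peval c j t) r 1)
              = RInt (fun t => peval c j t * peval c j t) (-1) 1)
    by (apply RInt_Chasles; apply cont_ex_RInt; solve_cont).
  rewrite Horth in E. destruct (Nat.eq_dec j j) as [_|]; [|lia].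
  assert (0 <= RInt (fun t => peval c j t * peval c j t) (-1) r).
  { apply RInt_ge_0; [lra | apply cont_ex_RInt; solve_cont | intros; apply Rle_0_sqr]. }
  unfold plus in E; simpl in E. lra.
Qed.

Lemma peval0_sq (t : R) : peval c 0 t * peval c 0 t = 1 / 2.
Proof.
  assert (Hc : forall t, peval c 0 t = c 0%nat 0%nat) by (intros; unfold peval; cbn; ring).
  pose proof (Horth 0 0) as H. destruct (Nat.eq_dec 0 0) as [_|]; [|lia].
  rewrite (RInt_extR _ (fun _ => c 0%nat 0%nat * c 0%nat 0%nat)) in H
    by (intros; rewrite Hc; reflexivity).
  rewrite RInt_const in H. unfold scal in H; cbn in H; unfold mult in H; cbn in H.
  rewrite Hc. lra.
Qed.

Section Bessel.

Variable g : R -> R.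
Hypothesis Hg : cont g.
Variable N : nat.

Let proj (t : R) : R := sum_f_R0 (fun l => coef c g l * peval c l t) N.

Lemma proj_cont : cont proj.
Proof. apply cont_sum. intros l. pose proof (peval_cont l). solve_cont. Qed.

Lemma RInt_peval_proj (l : nat) : (l <= N)%nat ->
  RInt (fun t => peval c l t * proj t) (-1) 1 = coef c g l.
Proof.
  intros Hl.
  rewrite (RInt_extR _ (fun t => sum_f_R0 (fun j => coef c g j * (peval c l t * peval c j t)) N))
    by (intros; unfold proj; rewrite scal_sum; apply sum_eq; intros; ring).
  rewrite RInt_sumR by (intros j; pose proof (peval_cont l); pose proof (peval_cont j); solve_cont).
  rewrite <- (sum_kronecker (coef c g) l N Hl). apply sum_eq. intros j _.
  rewrite RInt_scalR, Horth by (pose proof (peval_cont l); pose proof (peval_cont j); solve_cont).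
  reflexivity.
Qed.

Lemma RInt_mult_proj (h : R -> R) : cont h ->
  RInt (fun t => proj t * h t) (-1) 1
  = sum_f_R0 (fun l => coef c g l * RInt (fun t => peval c l t * h t) (-1) 1) N.
Proof.
  intros Hh.
  rewrite (RInt_extR _ (fun t => sum_f_R0 (fun l => coef c g l * (peval c l t * h t)) N))
    by (intros; unfold proj; rewrite Rmult_comm, scal_sum; apply sum_eq; intros; ring).
  rewrite RInt_sumR by (intros l; pose proof (peval_cont l); solve_cont).
  apply sum_eq. intros l _. apply RInt_scalR. pose proof (peval_cont l). solve_cont.
Qed.

(* Bessel's inequality: sum_{l <= N} coef g l ^ 2 <= ||g||^2,
   from 0 <= ||g - proj||^2 = ||g||^2 - sum_{l <= N} coef g l ^ 2. *)
Lemma bessel : sum_f_R0 (fun l => coef c g l ^ 2) N <= RInt (fun t => g t * g t) (-1) 1.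
Proof.
  pose proof proj_cont as Hproj.
  assert (Hgg : RInt (fun t => proj t * g t) (-1) 1 = sum_f_R0 (fun l => coef c g l ^ 2) N).
  { rewrite RInt_mult_proj by exact Hg. apply sum_eq. intros l _. unfold coef.
    rewrite (RInt_extR (fun t => peval c l t * g t) (fun t => g t * peval c l t))
      by (intros; ring).
    ring. }
  assert (Hpp : RInt (fun t => proj t * proj t) (-1) 1 = sum_f_R0 (fun l => coef c g l ^ 2) N).
  { rewrite RInt_mult_proj by exact Hproj. apply sum_eq. intros l Hl.
    rewrite RInt_peval_proj by exact Hl. ring. }
  assert (Hpos : 0 <= RInt (fun t => (g t - proj t) * (g t - proj t)) (-1) 1).
  { apply RInt_ge_0; [lra | apply cont_ex_RInt; solve_cont | intros; apply Rle_0_sqr]. }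
  rewrite (RInt_extR _ (fun t => (g t * g t - 2 * (proj t * g t)) + proj t * proj t))
    in Hpos by (intros; ring).
  rewrite RInt_plusR, RInt_minusR, RInt_scalR, Hgg, Hpp in Hpos by solve_cont.
  lra.
Qed.

End Bessel.

End Orthonormal.

Lemma Theta_pos (x : R) : 0 < x -> Theta x = 1.
Proof. intros H. unfold Theta. destruct (Rlt_dec x 0); lra. Qed.

Lemma Theta_neg (x : R) : x < 0 -> Theta x = 0.
Proof. intros H. unfold Theta. destruct (Rlt_dec x 0); lra. Qed.

Lemma RInt_Theta (a tau : R) (h H : R -> R) : -1 < tau < 1 ->
  (forall t, is_derive H t (h t)) -> cont h ->
  RInt (fun rho => a * (Theta (tau - rho) * h rho)) (-1) 1 = a * (H tau - H (-1)).
Proof.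
  intros Htau HH Hh.
  set (f := fun rho => a * (Theta (tau - rho) * h rho)).
  assert (Hleft : is_RInt f (-1) tau (a * (H tau - H (-1)))).
  { apply (is_RInt_extR (fun rho => scal a (h rho))).
    { intros x Hx. rewrite Rmin_left, Rmax_right in Hx by lra.
      unfold f. rewrite Theta_pos by lra. unfold scal; cbn; unfold mult; cbn. ring. }
    apply (is_RInt_scal h (-1) tau a (minus (H tau) (H (-1)))), (is_RInt_derive H h); auto. }
  assert (Hright : is_RInt f tau 1 (scal (1 - tau) 0)).
  { apply (is_RInt_extR (fun _ => 0)).
    - intros x Hx. rewrite Rmin_left, Rmax_right in Hx by lra.
      unfold f. rewrite Theta_neg by lra. ring.
    - exact (is_RInt_const (V := R_NormedModule) tau 1 0). }
  rewrite (is_RInt_unique f _ _ _ (is_RInt_Chasles f _ _ _ _ _ Hleft Hright)).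
  unfold plus, scal; cbn; unfold mult; cbn. ring.
Qed.

Definition tail (c : nat -> nat -> R) (d k : nat) (r : R) : R :=
  RInt (fun t => peval c d t * peval c k t) r 1.

Section Entries.

Variable c : nat -> nat -> R.
Hypothesis Hlead : forall k, 0 < c k k.
Hypothesis Horth : forall k l,
  RInt (fun t => peval c k t * peval c l t) (-1) 1 = if Nat.eq_dec k l then 1 else 0.
Variables d k : nat.

Lemma tail_antideriv : exists A, is_poly (S (d + k)) A
  /\ (forall t, is_derive A t (peval c d t * peval c k t))
  /\ forall r, tail c d k r = A 1 - A r.
Proof.
  destruct (is_poly_antideriv (d + k) (fun t => peval c d t * peval c k t)) as [A [HAp HA]].
  { apply is_poly_mult; apply is_poly_peval. }
  exists A. split; [exact HAp | split; [exact HA |]].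
  intros r. apply RInt_antideriv; [exact HA|].
  pose proof (peval_cont c d). pose proof (peval_cont c k). solve_cont.
Qed.

Lemma tail_poly : is_poly (S (d + k)) (tail c d k).
Proof.
  destruct tail_antideriv as [A [HAp [_ HQ]]].
  apply is_poly_ext with (fun r => A 1 + -1 * A r); [intros; rewrite HQ; ring|].
  apply is_poly_affine, HAp.
Qed.

Lemma tail_cont : cont (tail c d k).
Proof. exact (is_poly_cont _ _ tail_poly). Qed.

Lemma bmat_inner (l : nat) (Al : R -> R) : (forall t, is_derive Al t (peval c l t)) ->
  bmat c d k l = RInt (fun tau => peval c d tau * peval c k tau * (Al tau - Al (-1))) (-1) 1.
Proof.
  intros HAl. unfold bmat. apply RInt_extR.
  intros tau Htau. rewrite Rmin_left, Rmax_right in Htau by lra.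
  rewrite <- (RInt_Theta _ tau (peval c l)) by (auto; apply peval_cont).
  apply RInt_extR. intros; ring.
Qed.

Lemma bmat_coef_tail (l : nat) : bmat c d k l = coef c (tail c d k) l.
Proof.
  destruct (is_poly_antideriv l (peval c l) (is_poly_peval c l)) as [Al [_ HAl]].
  destruct tail_antideriv as [A [_ [HA HQ]]].
  rewrite (bmat_inner l Al HAl). unfold coef.
  rewrite (RInt_extR (fun t => tail c d k t * peval c l t) (fun t => (A 1 - A t) * peval c l t))
    by (intros; rewrite HQ; reflexivity).
  apply RInt_by_parts; auto.
  - pose proof (peval_cont c d). pose proof (peval_cont c k). solve_cont.
  - apply peval_cont.
Qed.

(* B^(d) is banded: b_{k,l} = 0 unless |k - l| <= d + 1.  Below the band
   p_k is orthogonal to p_d (A_l - A_l(-1)); above it p_l is orthogonal to Q. *)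
Lemma bmat_band (l : nat) : (l + d + 1 < k \/ k + d + 1 < l)%nat -> bmat c d k l = 0.
Proof.
  intros [Hlow | Hhigh].
  - destruct (is_poly_antideriv l (peval c l) (is_poly_peval c l)) as [Al [HAlp HAl]].
    rewrite (bmat_inner l Al HAl).
    rewrite (RInt_extR _ (fun t => peval c k t * (peval c d t * (- Al (-1) + 1 * Al t))))
      by (intros; ring).
    apply (peval_orth_low c Hlead Horth k (d + S l)); [|lia].
    apply is_poly_mult; [apply is_poly_peval | apply is_poly_affine, HAlp].
  - rewrite bmat_coef_tail. unfold coef.
    rewrite (RInt_extR _ (fun t => peval c l t * tail c d k t)) by (intros; ring).
    apply (peval_orth_low c Hlead Horth l (S (d + k))); [apply tail_poly | lia].
Qed.

Lemma bmat_sq_sum_le (N : nat) :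
  sum_f_R0 (fun l => bmat c d k l ^ 2) N <= RInt (fun t => tail c d k t * tail c d k t) (-1) 1.
Proof.
  rewrite (sum_eq _ (fun l => coef c (tail c d k) l ^ 2))
    by (intros; rewrite bmat_coef_tail; reflexivity).
  apply bessel; [exact Horth | apply tail_cont].
Qed.

Lemma tail_abs_le (r : R) : r <= 1 ->
  Rabs (tail c d k r)
  <= (RInt (fun t => peval c d t * peval c d t) r 1
      + RInt (fun t => peval c k t * peval c k t) r 1) / 2.
Proof. intros Hr. apply RInt_mult_abs_le; [exact Hr | apply peval_cont ..]. Qed.

(* |Q| <= 1 on [-1, 1], hence ||Q||^2 <= 2. *)
Lemma tail_sq_le : RInt (fun t => tail c d k t * tail c d k t) (-1) 1 <= 2.
Proof.
  replace 2 with (RInt (fun _ => 1 * 1) (-1) 1)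
    by (rewrite RInt_const; unfold scal; cbn; unfold mult; cbn; ring).
  apply RInt_sq_le; [lra | apply tail_cont | apply cont_const |].
  intros x Hx. pose proof (tail_abs_le x ltac:(lra)).
  pose proof (peval_sq_tail_le c Horth d x Hx). pose proof (peval_sq_tail_le c Horth k x Hx).
  lra.
Qed.

(* For d = 0 the constant p_0^2 = 1/2 sharpens this to |Q(x)| <= (3 - x)/4,
   hence ||Q||^2 <= int_{-1}^1 ((3 - x)/4)^2 = 7/6. *)
Lemma tail_sq_le_deg0 : d = 0%nat ->
  RInt (fun t => tail c d k t * tail c d k t) (-1) 1 <= 7 / 6.
Proof.
  intros Hd. set (h := fun x => (3 - x) / 4).
  assert (Hh : cont h).
  { apply (is_poly_cont 1).
    exists (fun i => match i with O => 3 / 4 | _ => -1 / 4 end). intros; unfold h; cbn; field. }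
  assert (Hhh : RInt (fun t => h t * h t) (-1) 1 = 7 / 6 :> R).
  { rewrite (RInt_antideriv (fun t => - (3 - t) ^ 3 / 48)); [field | | solve_cont].
    intros t. auto_derive; [exact I | unfold h; field]. }
  rewrite <- Hhh. apply RInt_sq_le; [lra | apply tail_cont | exact Hh |].
  intros x Hx. pose proof (tail_abs_le x ltac:(lra)) as Hq.
  rewrite (RInt_extR (fun t => peval c d t * peval c d t) (fun _ => 1 / 2)) in Hq
    by (intros; rewrite Hd; apply (peval0_sq c Horth)).
  rewrite RInt_const in Hq. unfold scal in Hq; simpl in Hq; unfold mult in Hq; simpl in Hq.
  pose proof (peval_sq_tail_le c Horth k x Hx). unfold h. lra.
Qed.

End Entries.

Theorem lemma3p5 (c : nat -> nat -> R)
  (Hlead : forall k, 0 < c k k)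
  (Horth : forall k l,
      RInt (fun t => peval c k t * peval c l t) (-1) 1 = if Nat.eq_dec k l then 1 else 0)
  (d : nat) :
  forall k N, sum_f_R0 (fun l => Rabs (bmat c d k l)) N <= 3 * INR d + 2.
Proof.
  intros k N.
  assert (Hband : forall l, (l < k - S d \/ k - S d + (2 * d + 2) < l)%nat ->
                            bmat c d k l = 0)
    by (intros l Hl; apply (bmat_band c Hlead Horth); lia).
  pose proof (bmat_sq_sum_le c Horth d k N) as Hl2.
  assert (Hwidth : INR (2 * d + 2) + 1 = 2 * INR d + 3)
    by (rewrite plus_INR, mult_INR; cbn; ring).
  destruct (Nat.eq_dec d 0) as [Hd | Hd].
  - pose proof (tail_sq_le_deg0 c Horth d k Hd).
    pose proof (sum_abs_le_window _ _ _ N (2 / 3) ltac:(lra) Hband).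
    subst d. simpl INR in *. lra.
  - pose proof (tail_sq_le c Horth d k).
    pose proof (sum_abs_le_window _ _ _ N 1 ltac:(lra) Hband).
    assert (1 <= INR d) by (apply (le_INR 1); lia).
    lra.
Qed.
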